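(* Assume the setting in the context. For every choice of real coefficients $\{(\alpha_k,\beta_k)\}_{k=2}^K$ with $\alpha_k+\beta_k=1$ for all $k=2,\dots,K$, and for every $x\in\mathbb{R}^N$, $$T(x)=\sum_{k=1}^K L_k(x_{\mathcal C_k}).$$
   Context: Setting. Let $V=\{1,\dots,N\}$ and let $\mathcal G=(V,\mathcal E)$ be an undirected decomposable graph whose maximal cliques form a perfect sequence $\mathcal C_1,\dots,\mathcal C_K$. For $k=1,\dots,K$ define the histories $\mathcal H_k=\mathcal C_1\cup\cdots\cup\mathcal C_k$. For $k=2,\dots,K$ define the separators $\mathcal S_k=\mathcal H_{k-1}\cap\mathcal C_k$. Perfectness means that for each $k\ge2$ there is $j<k$ with $\mathcal S_k\subseteq\mathcal C_j$. For $k=2,\dots,K$ let $q(k)=\min\{j:\mathcal S_k\subseteq\mathcal C_j\}$, so that $q(k)<k$. For $j=1,\dots,K$ let $\mathcal Q_j=\{k\in\{2,\dots,K\}:q(k)=j\}$. Let $\Sigma\in\mathbb R^{N\times N}$ be symmetric positive definite and Markov with respect to $\mathcal G$, i.e. $(\Sigma^{-1})_{i,j}=0$ whenever $i\neq j$ and $\{i,j\}\notin\mathcal E$. Notation. For $U\subseteq V$: - $\Sigma_U$ is the principal submatrix of $\Sigma$ with rows and columns indexed by $U$; - $I_U$ is the $|U|\times|U|$ identity matrix; - $x_U$ is the subvector of $x$ with entries indexed by $U$. For $U\subseteq W\subseteq V$ and a matrix $A$ indexed by $U$, $[A]^W$ is the $|W|\times|W|$ matrix indexed by $W$ that equals $A$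 on $U\times U$ and is $0$ elsewhere. Test statistic. Define $T(x)=x^Tx-x^T\Sigma^{-1}x-\ln\det\Sigma$. Local matrices and constants. Given real coefficients $\alpha_k,\beta_k$ ($k=2,\dots,K$), define $$J_1=\big(I_{\mathcal C_1}-\Sigma_{\mathcal C_1}^{-1}\big)-\sum_{j\in\mathcal Q_1}\beta_j\big[I_{\mathcal S_j}-\Sigma_{\mathcal S_j}^{-1}\big]^{\mathcal C_1},$$ and, for $k=2,\dots,K$, $$J_k=\big(I_{\mathcal C_k}-\Sigma_{\mathcal C_k}^{-1}\big)-\sum_{j\in\mathcal Q_k}\beta_j\big[I_{\mathcal S_j}-\Sigma_{\mathcal S_j}^{-1}\big]^{\mathcal C_k}-\alpha_k\big[I_{\mathcal S_k}-\Sigma_{\mathcal S_k}^{-1}\big]^{\mathcal C_k}.$$ Define $$e_1=\ln\det\Sigma_{\mathcal C_1}-\sum_{j\in\mathcal Q_1}\beta_j\ln\det\Sigma_{\mathcal S_j},$$ and, for $k\ge2$, $$e_k=\ln\det\Sigma_{\mathcal C_k}-\sum_{j\in\mathcal Q_k}\beta_j\ln\det\Sigma_{\mathcal S_j}-\alpha_k\ln\det\Sigma_{\mathcal S_k}.$$ The local statistics are $L_k(x_{\mathcal C_k})=x_{\mathcal C_k}^TJ_kx_{\mathcal C_k}-e_k$. *)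

From HB Require Import structures.
From Stdlib Require Import Reals Lra ClassicalEpsilon FunctionalExtensionality PropExtensionality.
From mathcomp Require Import all_boot all_order all_algebra.
Set Implicit Arguments. Unset Strict Implicit. Unset Printing Implicit Defensive.

Definition Reqb (x y : R) : bool := if Req_EM_T x y then true else false.
Lemma Reqb_axiom : Equality.axiom Reqb.
Proof. move=> x y; rewrite /Reqb; case: Req_EM_T => h; [exact: ReflectT | exact: ReflectF]. Qed.
HB.instance Definition _ := hasDecEq.Build R Reqb_axiom.

Definition Rfind (P : pred R) (n : nat) : option R :=
  match excluded_middle_informative (exists x, P x) with
  | left h => Some (proj1_sig (constructive_indefinite_description _ h))
  | right _ => None
  end.
Lemma Rfind_correct P n x : Rfind P n = Some x -> P x.
Proof. rewrite /Rfind; case: excluded_middle_informative => // h [<-].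
by case: constructive_indefinite_description. Qed.
Lemma Rfind_complete (P : pred R) : (exists x, P x) -> exists n, Rfind P n.
Proof. move=> h; exists 0%N; rewrite /Rfind; by case: excluded_middle_informative. Qed.
Lemma Rfind_ext (P Q : pred R) : P =1 Q -> Rfind P =1 Rfind Q.
Proof. move=> h n; have -> : P = Q by apply: functional_extensionality. by []. Qed.
HB.instance Definition _ := hasChoice.Build R Rfind_correct Rfind_complete Rfind_ext.

Lemma RaddA : associative Rplus. Proof. move=> *; lra. Qed.
Lemma RaddC : commutative Rplus. Proof. move=> *; lra. Qed.
Lemma Radd0 : left_id R0 Rplus. Proof. move=> *; lra. Qed.
Lemma RaddN : left_inverse R0 Ropp Rplus. Proof. move=> *; lra. Qed.
HB.instance Definition _ := GRing.isZmodule.Build R RaddA RaddC Radd0 RaddN.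

Lemma RmulA : associative Rmult. Proof. move=> *; ring. Qed.
Lemma RmulC : commutative Rmult. Proof. move=> *; ring. Qed.
Lemma Rmul1 : left_id R1 Rmult. Proof. move=> *; ring. Qed.
Lemma RmulD : left_distributive Rmult Rplus. Proof. move=> *; ring. Qed.
Lemma R1n0 : R1 != R0 :> R. Proof. by apply/eqP; lra. Qed.
HB.instance Definition _ := GRing.Zmodule_isComNzRing.Build R RmulA RmulC Rmul1 RmulD R1n0.

Definition Rinvx (x : R) : R := if Reqb x R0 then R0 else Rinv x.
Local Open Scope ring_scope.
Lemma RmulV (x : R) : x != 0 -> Rinvx x * x = 1.
Proof. move=> h; rewrite /Rinvx (negbTE h : Reqb x R0 = false); apply: Rinv_l => e.
by move: h; rewrite e; move/eqP. Qed.
Lemma Rinv0x : Rinvx 0 = 0.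
Proof. by rewrite /Rinvx /Reqb; case: Req_EM_T. Qed.
HB.instance Definition _ := GRing.ComNzRing_isField.Build R RmulV Rinv0x.

Definition Rleb (x y : R) : bool := if Rle_dec x y then true else false.
Definition Rltb (x y : R) : bool := if Rlt_dec x y then true else false.

Lemma RlebP x y : reflect (Rle x y) (Rleb x y).
Proof. rewrite /Rleb; case: Rle_dec => h; [exact: ReflectT | exact: ReflectF]. Qed.
Lemma RltbP x y : reflect (Rlt x y) (Rltb x y).
Proof. rewrite /Rltb; case: Rlt_dec => h; [exact: ReflectT | exact: ReflectF]. Qed.

Local Open Scope ring_scope.
Lemma Rle0_add (x y : R) : Rleb 0 x -> Rleb 0 y -> Rleb 0 (x + y).
Proof. move=> /RlebP h1 /RlebP h2; apply/RlebP; rewrite /GRing.add /=; simpl in *. 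
change (Rle R0 (Rplus x y)); change (Rle R0 x) in h1; change (Rle R0 y) in h2; lra. Qed.
Lemma Rle0_mul (x y : R) : Rleb 0 x -> Rleb 0 y -> Rleb 0 (x * y).
Proof. move=> /RlebP h1 /RlebP h2; apply/RlebP.
change (Rle R0 (Rmult x y)); change (Rle R0 x) in h1; change (Rle R0 y) in h2; nra. Qed.
Lemma Rle0_anti (x : R) : Rleb 0 x -> Rleb x 0 -> x = 0.
Proof. move=> /RlebP h1 /RlebP h2; change (Rle R0 x) in h1; change (Rle x R0) in h2.
change (x = R0); lra. Qed.
Lemma Rsub_ge0 (x y : R) : Rleb 0 (y - x) = Rleb x y.
Proof.
by apply/RlebP/RlebP => h; change (Rle R0 (Rminus y x)) in h || change (Rle R0 (Rminus y x)); lra. Qed.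
Lemma Rle0_total (x : R) : Rleb 0 x || Rleb x 0.
Proof. case: (RlebP 0 x) => //= h; apply/RlebP; change (~ Rle R0 x) in h; change (Rle x R0); lra. Qed.
Lemma RnormN (x : R) : Rabs (- x) = Rabs x.
Proof. exact: Rabs_Ropp. Qed.
Lemma Rge0_norm (x : R) : Rleb 0 x -> Rabs x = x.
Proof. move=> /RlebP h; exact: Rabs_right (Rle_ge _ _ h). Qed.
Lemma Rlt_def (x y : R) : Rltb x y = (y != x) && Rleb x y.
Proof. apply/RltbP/andP.
- move=> h; split; [apply/eqP => e; rewrite e in h; lra | apply/RlebP; lra].
- by case=> /eqP h /RlebP h2; lra. Qed.
HB.instance Definition _ := Num.IntegralDomain_isLeReal.Build R
  Rle0_add Rle0_mul Rle0_anti Rsub_ge0 Rle0_total RnormN Rge0_norm Rlt_def.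


(* Graph / clique notions.  V = 'I_N (0-based copy of {1,..,N}); the graph   *)
(* is a symmetric irreflexive adjacency relation E on 'I_N.                  *)

Definition is_clique (N : nat) (E : rel 'I_N) (A : {set 'I_N}) : bool :=
  [forall u in A, forall v in A, (u != v) ==> E u v].

(* Cliques are indexed by nat, only C 1, ..., C K matter. *)
Definition hist (N : nat) (C : nat -> {set 'I_N}) (k : nat) : {set 'I_N} :=
  \bigcup_(1 <= j < k.+1) C j.

Definition sep (N : nat) (C : nat -> {set 'I_N}) (k : nat) : {set 'I_N} :=
  hist C k.-1 :&: C k.

(* q(k) = min { j in 1..K : S_k \subset C_j } (0 if no such j). *)
Definition qidx (N : nat) (C : nat -> {set 'I_N}) (K k : nat) : nat :=
  head 0%N [seq j <- iota 1 K | sep C k \subset C j].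

(* Sub-matrices / sub-vectors indexed by U (in the increasing enumeration    *)
(* of U), and zero padding [A]^W.                                            *)

Definition subm (N : nat) (U : {set 'I_N}) (A : 'M[R]_N) : 'M[R]_#|U| :=
  \matrix_(i, j) A (enum_val i) (enum_val j).

Definition subv (N : nat) (U : {set 'I_N}) (x : 'cV[R]_N) : 'cV[R]_#|U| :=
  \col_i x (enum_val i) ord0.

Arguments subm {N} U A.
Arguments subv {N} U x.

(* [A]^W : equals A on U x U, 0 elsewhere (A indexed by U, result by W). *)
Definition pad (N : nat) (U W : {set 'I_N}) (A : 'M[R]_#|U|) : 'M[R]_#|W| :=
  \matrix_(i, j)
    match [pick a : 'I_#|U| | enum_val a == enum_val i :> 'I_N],
          [pick b : 'I_#|U| | enum_val b == enum_val j :> 'I_N] with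
    | Some a, Some b => A a b
    | _, _ => 0
    end.

Arguments pad {N} U W A.

Definition Tstat (N : nat) (Sigma : 'M[R]_N) (x : 'cV[R]_N) : R :=
  (x^T *m x) ord0 ord0 - (x^T *m invmx Sigma *m x) ord0 ord0 - ln (\det Sigma).

Definition IminusInv (N : nat) (Sigma : 'M[R]_N) (U : {set 'I_N}) : 'M[R]_#|U| :=
  1%:M - invmx (subm U Sigma).
Arguments IminusInv {N} Sigma U.

Definition Jmat (N K : nat) (C : nat -> {set 'I_N}) (Sigma : 'M[R]_N)
    (alpha beta : nat -> R) (k : nat) : 'M[R]_#|C k| :=
  IminusInv Sigma (C k)
  - (\sum_(2 <= j < K.+1 | qidx C K j == k)
        beta j *: pad (sep C j) (C k) (IminusInv Sigma (sep C j)))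
  - (if (2 <= k)%N then alpha k *: pad (sep C k) (C k) (IminusInv Sigma (sep C k))
     else 0).

Definition econst (N K : nat) (C : nat -> {set 'I_N}) (Sigma : 'M[R]_N)
    (alpha beta : nat -> R) (k : nat) : R :=
  ln (\det (subm (C k) Sigma))
  - (\sum_(2 <= j < K.+1 | qidx C K j == k) beta j * ln (\det (subm (sep C j) Sigma)))
  - (if (2 <= k)%N then alpha k * ln (\det (subm (sep C k) Sigma)) else 0).

Definition Lstat (N K : nat) (C : nat -> {set 'I_N}) (Sigma : 'M[R]_N)
    (alpha beta : nat -> R) (k : nat) (x : 'cV[R]_N) : R :=
  let xC := subv (C k) x in
  (xC^T *m Jmat K C Sigma alpha beta k *m xC) ord0 ord0 - econst K C Sigma alpha beta k.

From Pilot Require Import Defs.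
From HB Require Import structures.
From Stdlib Require Import Reals.
From mathcomp Require Import all_boot all_order all_algebra.
From mathcomp Require Import fingroup perm ring zify.
Import Order.TTheory GRing.Theory Num.Theory.
Set Implicit Arguments. Unset Strict Implicit. Unset Printing Implicit Defensive.
Local Open Scope ring_scope.

(* For U a set of vertices let localStat U = x_U^T (I_U - Sigma_U^-1) x_U
   - ln det Sigma_U be the statistic of the marginal on U, so T = localStat V.
   The proof has three ingredients.
   1. Separation (invPad_union, det_union): if the block of [Sigma_{H u D}^-1]
      linking H \ D to D \ H vanishes, then the padded concentration matrices
      and the log-principal-minors are modular; hence so is localStat.  The
      determinant part rests on Jacobi's complementary minor identity.
   2. Markov property (condIndep_hist): by downward induction on k, the
      concentration matrix of the history H_k is supported inside the cliques
      C_1..C_k; so H_{k-1} and C_k are separated by S_k.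
   3. Bookkeeping: telescoping gives T = sum_k localStat C_k - sum_k localStat
      S_k, while each L_k expands into localStat C_k minus beta_j-multiples of
      the separators S_j with q(j) = k and alpha_k times localStat S_k; since
      alpha_k + beta_k = 1 the sums agree. *)

(* Quadratic forms x^T M x, written as an explicit double sum so that they are
   linear in M and can be compared across index sets. *)
Definition quad n (x : 'cV[R]_n) (M : 'M[R]_n) :=
  \sum_i \sum_j x i 0 * M i j * x j 0.

Lemma quadE n (x : 'cV[R]_n) (M : 'M[R]_n) : (x^T *m M *m x) 0 0 = quad x M.
Proof.
rewrite mxE /quad exchange_big; apply: eq_bigr => j _.
by rewrite mxE big_distrl; apply: eq_bigr => i _; rewrite !mxE.
Qed.

Section QuadLinear.
Variables (n : nat) (x : 'cV[R]_n).

Lemma quad0 : quad x 0 = 0.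
Proof. by rewrite /quad big1 // => i _; rewrite big1 // => j _; rewrite mxE mulr0 mul0r. Qed.

Lemma quadD (A B : 'M[R]_n) : quad x (A + B) = quad x A + quad x B.
Proof.
rewrite /quad -big_split; apply: eq_bigr => i _; rewrite -big_split.
by apply: eq_bigr => j _; rewrite !mxE /= mulrDr mulrDl.
Qed.

Lemma quadB (A B : 'M[R]_n) : quad x (A - B) = quad x A - quad x B.
Proof.
rewrite /quad -sumrB; apply: eq_bigr => i _; rewrite -sumrB.
by apply: eq_bigr => j _; rewrite !mxE; ring.
Qed.

Lemma quadZ c (A : 'M[R]_n) : quad x (c *: A) = c * quad x A.
Proof.
rewrite /quad mulr_sumr; apply: eq_bigr => i _; rewrite mulr_sumr.
by apply: eq_bigr => j _; rewrite mxE; ring.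
Qed.

Lemma quad_sum (I : Type) (r : seq I) (P : pred I) (F : I -> 'M[R]_n) :
  quad x (\sum_(i <- r | P i) F i) = \sum_(i <- r | P i) quad x (F i).
Proof. exact: (big_morph (quad x) quadD quad0). Qed.

End QuadLinear.

Section ZeroPadding.
Variable N : nat.
Implicit Types (U : {set 'I_N}) (i j : 'I_N).

Definition padV U (B : 'M[R]_#|U|) : 'M[R]_N :=
  \matrix_(i, j)
    match [pick a : 'I_#|U| | enum_val a == i],
          [pick b : 'I_#|U| | enum_val b == j] with
    | Some a, Some b => B a b
    | _, _ => 0
    end.

Lemma pick_enum_val U (a : 'I_#|U|) :
  [pick b : 'I_#|U| | enum_val b == enum_val a] = Some a.
Proof. by case: pickP => [b /eqP /enum_val_inj -> //|/(_ a)]; rewrite eqxx. Qed.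

Lemma pick_notin U i : i \notin U -> [pick b : 'I_#|U| | enum_val b == i] = None.
Proof. by move=> hi; case: pickP => // b /eqP e; move: hi; rewrite -e enum_valP. Qed.

Lemma enum_val_onto U i : i \in U -> exists a : 'I_#|U|, enum_val a = i.
Proof. by move=> hi; exists (enum_rank_in hi i); exact: enum_rankK_in. Qed.

Lemma padV_enum U (B : 'M[R]_#|U|) a b : padV B (enum_val a) (enum_val b) = B a b.
Proof. by rewrite mxE !pick_enum_val. Qed.

Lemma padV_out U (B : 'M[R]_#|U|) i j : ~~ ((i \in U) && (j \in U)) -> padV B i j = 0.
Proof.
rewrite negb_and mxE => /orP [h|h]; rewrite (pick_notin h) //.
by case: (pickP (fun a : 'I_#|U| => enum_val a == i)).
Qed.

Lemma padVB U (A B : 'M[R]_#|U|) : padV (A - B) = padV A - padV B.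
Proof.
apply/matrixP => i j; rewrite !mxE.
case: (pickP (fun a : 'I_#|U| => enum_val a == i)) => [a _|_];
case: (pickP (fun a : 'I_#|U| => enum_val a == j)) => [b _|_]; by rewrite ?mxE ?subr0.
Qed.

Lemma quad_restrict U (x : 'cV[R]_N) (F : 'M[R]_N) :
  (forall i j, ~~ ((i \in U) && (j \in U)) -> F i j = 0) ->
  quad (subv U x) (\matrix_(a, b) F (enum_val a) (enum_val b)) = quad x F.
Proof.
move=> hF; rewrite /quad.
have -> : \sum_i \sum_j x i 0 * F i j * x j 0 =
          \sum_(i in U) \sum_(j in U) x i 0 * F i j * x j 0.
  rewrite [RHS]big_mkcond; apply: eq_bigr => i _; case: ifP => hi.
    rewrite [RHS]big_mkcond; apply: eq_bigr => j _; case: ifP => hj //.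
    by rewrite hF ?hi ?hj // mulr0 mul0r.
  by apply: big1 => j _; rewrite hF ?hi // mulr0 mul0r.
rewrite [RHS]big_enum_val; apply: eq_bigr => a _.
by rewrite [RHS]big_enum_val; apply: eq_bigr => b _; rewrite !mxE.
Qed.

Lemma quad_padV U (x : 'cV[R]_N) (B : 'M[R]_#|U|) :
  quad (subv U x) B = quad x (padV B).
Proof.
rewrite -(@quad_restrict U); last exact: padV_out.
by congr quad; apply/matrixP => a b; rewrite mxE padV_enum.
Qed.

Lemma quad_pad (S W : {set 'I_N}) (x : 'cV[R]_N) (A : 'M[R]_#|S|) :
  S \subset W -> quad (subv W x) (pad S W A) = quad (subv S x) A.
Proof.
move=> sSW; rewrite [RHS]quad_padV -(@quad_restrict W) => [|i j h]; last first.
  by apply: padV_out; apply: contra h => /andP [hi hj]; rewrite !(subsetP sSW).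
by congr quad; apply/matrixP => a b; rewrite !mxE.
Qed.

End ZeroPadding.
Arguments padV {N} U B.

Section PrincipalInverses.
Variables (N : nat) (Sigma : 'M[R]_N).
Hypothesis Sigma_sym : Sigma^T = Sigma.
Hypothesis Sigma_pd : forall y : 'cV[R]_N, y != 0 -> 0 < (y^T *m Sigma *m y) 0 0.
Implicit Types (U W H D : {set 'I_N}) (i j l : 'I_N).

Definition invPad U : 'M[R]_N := padV U (invmx (subm U Sigma)).

Lemma Sigma_symE i j : Sigma i j = Sigma j i.
Proof. by rewrite -{1}Sigma_sym mxE. Qed.

(* Positive definiteness: a vector v supported on U with (v Sigma)_U = 0 is 0,
   since then v^T Sigma v = 0. *)
Lemma pd_row_zero U (v : 'I_N -> R) :
  (forall l, l \notin U -> v l = 0) ->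
  (forall j, j \in U -> \sum_l v l * Sigma l j = 0) -> forall l, v l = 0.
Proof.
move=> vU vSigma; pose y : 'cV[R]_N := \col_l v l.
suff y0 : y = 0 by move=> l; have := congr1 (fun y : 'cV_N => y l 0) y0; rewrite !mxE.
apply/eqP; apply: contraT => /Sigma_pd; rewrite quadE /quad exchange_big /=.
rewrite big1 ?ltxx // => j _.
have -> : \sum_i y i 0 * Sigma i j * y j 0 = (\sum_i v i * Sigma i j) * v j.
  by rewrite big_distrl; apply: eq_bigr => i _; rewrite !mxE.
by case: (boolP (j \in U)) => hj; [rewrite vSigma ?mul0r | rewrite vU ?mulr0].
Qed.

(* Principal submatrices of Sigma, and Sigma itself, are invertible:
   a kernel vector would contradict pd_row_zero. *)
Lemma subm_unit U : subm U Sigma \in unitmx.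
Proof.
rewrite unitmxE unitfE; apply/negP => /det0P [v v0 vSigma]; move/eqP: v0; apply.
pose w l := if [pick a : 'I_#|U| | enum_val a == l] is Some a then v 0 a else 0.
have w0 : forall l, w l = 0.
  apply: (@pd_row_zero U) => [l hl|j hj]; first by rewrite /w pick_notin.
  have [b <-] := enum_val_onto hj.
  rewrite (bigID (mem U)) /= [X in _ + X]big1 ?addr0 => [|l /negbTE hl]; last first.
    by rewrite /w pick_notin ?hl // mul0r.
  transitivity ((v *m subm U Sigma) 0 b); last by rewrite vSigma mxE.
  by rewrite mxE big_enum_val; apply: eq_bigr => a _; rewrite /w pick_enum_val !mxE.
by apply/rowP => a; have := w0 (enum_val a); rewrite /w pick_enum_val mxE.
Qed.

Lemma Sigma_unit : Sigma \in unitmx.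
Proof.
rewrite unitmxE unitfE; apply/negP => /det0P [v v0 vSigma]; move/eqP: v0; apply.
apply/rowP => l; rewrite mxE; move: l; apply: (@pd_row_zero setT) => [l|j _].
  by rewrite inE.
by transitivity ((v *m Sigma) 0 j); [rewrite mxE | rewrite vSigma mxE].
Qed.

Lemma invPad_out U i j : ~~ ((i \in U) && (j \in U)) -> invPad U i j = 0.
Proof. exact: padV_out. Qed.

Lemma invPad_mul U i j : i \in U -> j \in U ->
  \sum_l invPad U i l * Sigma l j = (i == j)%:R.
Proof.
move=> hi hj; have [c <-] := enum_val_onto hi; have [d <-] := enum_val_onto hj.
rewrite (bigID (mem U)) /= [X in _ + X]big1 ?addr0 => [|l /negbTE hl]; last first.
  by rewrite invPad_out ?hl ?andbF // mul0r.
transitivity ((invmx (subm U Sigma) *m subm U Sigma) c d); last first.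
  by rewrite mulVmx ?subm_unit // mxE (inj_eq enum_val_inj).
by rewrite mxE big_enum_val; apply: eq_bigr => a _; rewrite /invPad padV_enum !mxE.
Qed.

Lemma invPad_sym U i j : invPad U i j = invPad U j i.
Proof.
case: (boolP ((i \in U) && (j \in U))) => [/andP [hi hj]|hij]; last first.
  by rewrite !invPad_out // andbC.
have [c <-] := enum_val_onto hi; have [d <-] := enum_val_onto hj.
have symU : subm U Sigma = (subm U Sigma)^T.
  by apply/matrixP => a b; rewrite !mxE Sigma_symE.
by rewrite /invPad !padV_enum [in LHS]symU -trmx_inv mxE.
Qed.

Lemma invPad_unique U (G : 'M[R]_N) :
  (forall i j, ~~ ((i \in U) && (j \in U)) -> G i j = 0) ->
  (forall i j, i \in U -> j \in U -> \sum_l G i l * Sigma l j = (i == j)%:R) ->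
  G = invPad U.
Proof.
move=> GU GSigma; apply/matrixP => i l; apply/eqP; rewrite -subr_eq0; apply/eqP.
case: (boolP (i \in U)) => hi; last by rewrite GU ?invPad_out ?(negbTE hi) ?subr0.
move: l; apply: (@pd_row_zero U) => [l hl|j hj].
  by rewrite GU ?invPad_out ?(negbTE hl) ?andbF ?subr0.
under eq_bigr do rewrite mulrBl.
by rewrite sumrB GSigma // invPad_mul // subrr.
Qed.

Lemma invPad_setT : invPad setT = invmx Sigma.
Proof.
symmetry; apply: invPad_unique => [i j|i j _ _]; first by rewrite !inE.
by transitivity ((invmx Sigma *m Sigma) i j); [rewrite mxE | rewrite mulVmx ?Sigma_unit // mxE].
Qed.

Lemma invPad_row U W i : U \subset W -> i \in U ->
  (forall l, l \in W -> l \notin U -> invPad W i l = 0) ->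
  forall l, invPad W i l = invPad U i l.
Proof.
move=> sUW hi hW l; apply/eqP; rewrite -subr_eq0; apply/eqP; move: l.
apply: (@pd_row_zero U) => [l hl|j hj].
  rewrite [invPad U i l]invPad_out ?(negbTE hl) ?andbF // subr0.
  by case: (boolP (l \in W)) => hl'; [rewrite hW | rewrite invPad_out ?(negbTE hl') ?andbF].
under eq_bigr do rewrite mulrBl.
by rewrite sumrB !invPad_mul ?(subsetP sUW) // subrr.
Qed.

(* H \ D and D \ H are conditionally independent given H :&: D (under the
   Gaussian law restricted to H :|: D): the corresponding block of the
   concentration matrix of H :|: D vanishes. *)
Definition condIndep H D : Prop :=
  forall i j, i \in H -> i \notin D -> j \in D -> j \notin H ->
  invPad (H :|: D) i j = 0.

Lemma addB_mxE (A B C : 'M[R]_N) i j : (A + B - C) i j = A i j + B i j - C i j.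
Proof. by rewrite !mxE. Qed.

Lemma invPad_union_off H D i l : condIndep H D -> i \notin H :&: D ->
  invPad (H :|: D) i l = (invPad H + invPad D - invPad (H :&: D)) i l.
Proof.
move=> hCI hi; rewrite addB_mxE [invPad (H :&: D) i l]invPad_out ?(negbTE hi) // subr0.
move: hi; rewrite inE negb_and => hi.
case: (boolP (i \in H)) hi => hiH /= hi.
- rewrite (@invPad_row H) ?subsetUl // => [|j hjHD hjH]; last first.
    by rewrite hCI //; case/setUP: hjHD hjH => // ->.
  by rewrite [invPad D i l]invPad_out ?(negbTE hi) ?addr0.
case: (boolP (i \in D)) hi => hiD _.
- rewrite (@invPad_row D) ?subsetUr // => [|j hjHD hjD]; last first.
    by rewrite invPad_sym hCI //; case/setUP: hjHD hjD => // ->.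
  by rewrite [invPad H i l]invPad_out ?(negbTE hiH) ?add0r.
by rewrite !invPad_out ?inE ?(negbTE hiH) ?(negbTE hiD) ?addr0.
Qed.

Lemma invPad_union H D : condIndep H D ->
  invPad (H :|: D) = invPad H + invPad D - invPad (H :&: D).
Proof.
move=> hCI; set M := _ - _; apply/matrixP => i l.
case: (boolP (i \in H :&: D)) => hi; last exact: invPad_union_off.
apply/eqP; rewrite -subr_eq0; apply/eqP; move: l.
apply: (@pd_row_zero (H :&: D)) => [l hl|j hj].
  rewrite invPad_sym invPad_union_off // /M !addB_mxE.
  by rewrite (invPad_sym H) (invPad_sym D) (invPad_sym (H :&: D)) subrr.
move: hi hj; rewrite !inE => /andP [hiH hiD] /andP [hjH hjD].
under eq_bigr do rewrite /M addB_mxE !mulrBl mulrDl.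
rewrite sumrB sumrB big_split /= !invPad_mul ?inE ?hiH ?hiD ?hjH ?hjD //.
by rewrite addrK subrr.
Qed.

End PrincipalInverses.

Section DeterminantsOfBlocks.
Variable N : nat.
Implicit Types (T U W Y : {set 'I_N}) (M : 'M[R]_N) (i j l : 'I_N).

(* ext U M agrees with M on U x U and with the identity elsewhere; its
   determinant is that of the principal submatrix on U (det_ext_subm). *)
Definition ext U M : 'M[R]_N :=
  \matrix_(i, j) if (i \in U) && (j \in U) then M i j else (i == j)%:R.

Lemma extE U M i j : ext U M i j = if (i \in U) && (j \in U) then M i j else (i == j)%:R.
Proof. by rewrite mxE. Qed.

Lemma ext_setT M : ext setT M = M.
Proof. by apply/matrixP => i j; rewrite extE !inE. Qed.

Lemma ext_set0 M : ext set0 M = 1%:M.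
Proof. by apply/matrixP => i j; rewrite extE !mxE !inE. Qed.

Lemma sum_delta_l i (f : 'I_N -> R) : \sum_l (i == l)%:R * f l = f i.
Proof.
rewrite (bigD1 i) //= eqxx mul1r big1 ?addr0 // => l hl.
by rewrite eq_sym (negbTE hl) mul0r.
Qed.

Lemma sum_delta_r j (f : 'I_N -> R) : \sum_l f l * (l == j)%:R = f j.
Proof.
rewrite (bigD1 j) //= eqxx mulr1 big1 ?addr0 // => l hl.
by rewrite (negbTE hl) mulr0.
Qed.

Lemma det_reindex n m (e : n = m) (f : 'I_n -> 'I_m) (A : 'M[R]_m) :
  injective f -> \det (\matrix_(i, j) A (f i) (f j) : 'M[R]_n) = \det A.
Proof.
case: m / e in f A * => finj; pose s := perm finj.
have -> : (\matrix_(i, j) A (f i) (f j) : 'M[R]_n) = row_perm s (col_perm s A).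
  by apply/matrixP => i j; rewrite !mxE !permE.
rewrite row_permE col_permE !det_mulmx !det_perm odd_permV.
by rewrite mulrCA -signr_addb addbb expr0 mulr1.
Qed.

(* A matrix whose columns outside T are unit vectors has the determinant of its
   principal submatrix on T: list T first, then the matrix is block
   lower-triangular with an identity block. *)
Lemma det_unit_cols T M :
  (forall i j, j \notin T -> M i j = (i == j)%:R) -> \det M = \det (subm T M).
Proof.
move=> unitM; have e : (#|T| + #|~: T| = N)%N by rewrite cardsC card_ord.
pose f (k : 'I_(#|T| + #|~: T|)) : 'I_N :=
  match split k with inl a => enum_val a | inr b => enum_val b end.
have fL a : f (lshift _ a) = enum_val a by rewrite /f (unsplitK (inl _ a)).
have fR b : f (rshift _ b) = enum_val b by rewrite /f (unsplitK (inr _ b)).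
have notT (b : 'I_#|~: T|) : enum_val b \notin T by have := enum_valP b; rewrite inE.
have finj : injective f.
  move=> k1 k2; case: (split_ordP k1) => [a1 ->|b1 ->];
    case: (split_ordP k2) => [a2 ->|b2 ->]; rewrite ?fL ?fR.
  - by move/enum_val_inj ->.
  - by move=> h; have := notT b2; rewrite -h enum_valP.
  - by move=> h; have := notT b1; rewrite h enum_valP.
  - by move/enum_val_inj ->.
rewrite -(det_reindex e M finj); set B := \matrix_(_, _) _.
have Bur : ursubmx B = 0.
  apply/matrixP => a b; rewrite !mxE fL fR unitM ?notT //.
  by case: eqP => // h; have := notT b; rewrite -h enum_valP.
have Bdr : drsubmx B = 1%:M.
  by apply/matrixP => a b; rewrite !mxE !fR unitM ?notT // (inj_eq enum_val_inj).
rewrite -[B]submxK Bur Bdr det_lblock det1 mulr1; congr (\det _).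
by apply/matrixP => a b; rewrite !mxE !fL.
Qed.

Lemma det_ext_subm U M : \det (ext U M) = \det (subm U M).
Proof.
rewrite (@det_unit_cols U) => [|i j hj]; last by rewrite extE (negbTE hj) andbF.
by congr (\det _); apply/matrixP => a b; rewrite !mxE !enum_valP.
Qed.

Lemma det_unit_cols_ext T M :
  (forall i j, j \notin T -> M i j = (i == j)%:R) -> \det M = \det (ext T M).
Proof.
by move=> unitM; rewrite det_ext_subm (det_unit_cols unitM).
Qed.

Lemma det_ext1 v M : \det (ext [set v] M) = M v v.
Proof.
have -> : ext [set v] M = diag_mx (\row_i (if i == v then M v v else 1)).
  apply/matrixP => i j; rewrite extE !mxE !inE.
  case: (i =P j) => [<-|hij] /=; first by case: (i =P v) => [->|]; rewrite ?eqxx ?andbb.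
  rewrite mulr0n; case: (i =P v) => [ei|]; case: (j =P v) => [ej|] //=.
  by case: hij; rewrite ei ej.
rewrite det_diag (bigD1 v) //= big1 ?mulr1 => [|i /negbTE hi]; by rewrite mxE ?eqxx ?hi.
Qed.

End DeterminantsOfBlocks.

Section PositiveDefiniteDeterminants.
Variables (N : nat) (Sigma : 'M[R]_N).
Hypothesis Sigma_sym : Sigma^T = Sigma.
Hypothesis Sigma_pd : forall y : 'cV[R]_N, y != 0 -> 0 < (y^T *m Sigma *m y) 0 0.
Implicit Types (U W Y H D : {set 'I_N}) (i j l : 'I_N).

Lemma ext_inv W : ext W Sigma *m ext W (invPad Sigma W) = 1%:M.
Proof.
apply: mulmx1C; apply/matrixP => i j; rewrite !mxE.
case: (boolP (i \in W)) => hi; last first.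
  under eq_bigr do rewrite [ext W _ i _]extE (negbTE hi).
  by rewrite sum_delta_l extE (negbTE hi).
case: (boolP (j \in W)) => hj; last first.
  under eq_bigr do rewrite [ext W Sigma _ j]extE (negbTE hj) andbF.
  by rewrite sum_delta_r extE hi (negbTE hj); case: eqP => // e; rewrite e hj in hi.
rewrite -(invPad_mul Sigma_pd hi hj); apply: eq_bigr => l _; rewrite !extE hi hj /=.
case: (boolP (l \in W)) => hl //=.
rewrite invPad_out ?(negbTE hl) ?andbF // mul0r.
by case: eqP => [e|_]; [rewrite -e hi in hl | rewrite mul0r].
Qed.

Lemma jacobi W Y : Y \subset W ->
  \det (ext W Sigma) * \det (ext Y (invPad Sigma W)) = \det (ext (W :\: Y) Sigma).
Proof.
move=> sYW; set A := ext W Sigma; set P := ext W (invPad Sigma W).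
pose Z : 'M[R]_N := \matrix_(i, j) if j \in Y then P i j else (i == j)%:R.
pose Rm : 'M[R]_N := \matrix_(i, j) if j \in Y then (i == j)%:R else A i j.
have AZ : A *m Z = Rm.
  apply/matrixP => i j; rewrite [Rm i j]mxE [LHS]mxE; case: (boolP (j \in Y)) => hj.
    transitivity ((A *m P) i j); last by rewrite ext_inv mxE.
    by rewrite [RHS]mxE; apply: eq_bigr => l _; rewrite [Z l j]mxE hj.
  rewrite -[RHS](sum_delta_r j (fun l => A i l)); apply: eq_bigr => l _.
  by rewrite [Z l j]mxE (negbTE hj).
have detZ : \det Z = \det (ext Y (invPad Sigma W)).
  rewrite (@det_unit_cols_ext _ Y) => [|i j /negbTE hj]; last by rewrite mxE hj.
  congr (\det _); apply/matrixP => i j; rewrite !extE [Z i j]mxE.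
  case: (boolP ((i \in Y) && (j \in Y))) => // /andP [hi hj].
  by rewrite hj /P extE !(subsetP sYW).
have detR : \det Rm = \det (ext (W :\: Y) Sigma).
  rewrite (@det_unit_cols_ext _ (~: Y)) => [|i j]; last by rewrite inE negbK mxE => ->.
  congr (\det _); apply/matrixP => i j; rewrite !extE [Rm i j]mxE !inE /A extE.
  by case: (i \in Y); case: (j \in Y); rewrite ?andbF.
by rewrite -detZ -detR -AZ det_mulmx.
Qed.

(* The diagonal of the concentration matrix is positive:
   invPad U v v = y^T Sigma y for y the v-th column of invPad U. *)
Lemma invPad_diag_pos U v : v \in U -> 0 < invPad Sigma U v v.
Proof.
move=> hv; pose y : 'cV[R]_N := \col_l invPad Sigma U l v.
have yE l : y l 0 = invPad Sigma U l v by rewrite mxE.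
have quad_y : (y^T *m Sigma *m y) 0 0 = invPad Sigma U v v.
  rewrite quadE /quad exchange_big /= -[RHS](sum_delta_l v (invPad Sigma U ^~ v)).
  apply: eq_bigr => j _.
  have -> : \sum_i y i 0 * Sigma i j * y j 0
          = (\sum_i invPad Sigma U v i * Sigma i j) * invPad Sigma U j v.
    by rewrite big_distrl; apply: eq_bigr => i _; rewrite !yE (invPad_sym Sigma_sym).
  case: (boolP (j \in U)) => hj; first by rewrite invPad_mul.
  by rewrite [invPad _ _ j v]invPad_out ?(negbTE hj) // !mulr0.
rewrite -quad_y; apply: Sigma_pd; apply/eqP => y0.
have := invPad_mul Sigma_pd hv hv; rewrite eqxx big1 => [/eqP|l _].
  by rewrite eq_sym oner_eq0.
have : y l 0 = 0 by rewrite y0 mxE.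
by rewrite yE (invPad_sym Sigma_sym) => ->; rewrite mul0r.
Qed.

(* Principal minors of a positive definite matrix are positive: peel off one
   index at a time with Jacobi's identity. *)
Lemma det_subm_pos U : 0 < \det (subm U Sigma).
Proof.
rewrite -det_ext_subm; move: {2}#|U| (erefl #|U|) => n.
elim: n U => [|n IH] U cardU.
  by move/eqP: cardU; rewrite cards_eq0 => /eqP ->; rewrite ext_set0 det1 ltr01.
have [v hv] : exists v, v \in U by apply/set0Pn; rewrite -card_gt0 cardU.
have := jacobi (W := U) (Y := [set v]); rewrite sub1set det_ext1 => /(_ hv) jac.
have : 0 < \det (ext (U :\ v) Sigma).
  by apply: IH; move: cardU; rewrite (cardsD1 v U) hv add1n => -[].
by rewrite -jac pmulr_lgt0 // invPad_diag_pos.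
Qed.

Lemma det_union H D : condIndep Sigma H D ->
  \det (subm (H :|: D) Sigma) * \det (subm (H :&: D) Sigma)
  = \det (subm H Sigma) * \det (subm D Sigma).
Proof.
move=> hCI; rewrite -!det_ext_subm.
have eH : (H :|: D) :\: (D :\: H) = H.
  by apply/setP => i; rewrite !inE; case: (i \in H); case: (i \in D).
have eHD : D :\: (D :\: H) = H :&: D.
  by apply/setP => i; rewrite !inE; case: (i \in H); case: (i \in D).
have jacU := jacobi (W := H :|: D) (Y := D :\: H); rewrite eH in jacU.
have jacD := jacobi (W := D) (Y := D :\: H); rewrite eHD in jacD.
have same_block : ext (D :\: H) (invPad Sigma (H :|: D)) = ext (D :\: H) (invPad Sigma D).
  apply/matrixP => i j; rewrite !extE; case: (boolP (_ && _)) => //.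
  rewrite !inE => /andP [/andP [/negbTE hiH _] _].
  rewrite (invPad_union Sigma_sym Sigma_pd hCI) addB_mxE.
  rewrite [invPad _ H i j]invPad_out ?hiH //.
  by rewrite [invPad _ (H :&: D) i j]invPad_out ?inE ?hiH // add0r subr0.
have sU : D :\: H \subset H :|: D.
  by apply/subsetP => i /setDP [hi _]; rewrite inE hi orbT.
by rewrite -(jacU sU) -(jacD (subsetDl _ _)) same_block; ring.
Qed.

End PositiveDefiniteDeterminants.

Section CliqueSequence.
Variables (N K : nat) (E : rel 'I_N) (C : nat -> {set 'I_N}).
Hypothesis E_sym : symmetric E.
Hypothesis C_all : forall A, maxset (is_clique E) A -> exists2 k, (1 <= k <= K)%N & C k = A.
Hypothesis C_perfect :
  forall k, (2 <= k <= K)%N -> exists2 j, (1 <= j < k)%N & sep C k \subset C j.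

Lemma histS k : (1 <= k)%N -> hist C k = hist C k.-1 :|: C k.
Proof. by case: k => // k _; rewrite /hist big_nat_recr. Qed.

Lemma hist1 : hist C 1 = C 1.
Proof. by rewrite histS // /hist big_geq // set0U. Qed.

Lemma sub_hist m k : (1 <= m <= k)%N -> C m \subset hist C k.
Proof.
move=> hm; apply/subsetP => i hi; rewrite /hist.
rewrite (big_morph (fun A : {set _} => i \in A) (fun A B => in_setU i A B) (in_set0 i)).
rewrite big_has.
by apply/hasP; exists m => //; rewrite mem_index_iota ltnS.
Qed.

Lemma clique_cover i j : (i == j) || E i j ->
  exists2 m, (1 <= m <= K)%N & (i \in C m) && (j \in C m).
Proof.
move=> hij; have cl : is_clique E [set i; j].
  apply/forallP => u; apply/implyP; rewrite !inE => hu.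
  apply/forallP => v; apply/implyP; rewrite !inE => hv; apply/implyP => huv.
  case/orP: hij => [/eqP eij|eij].
    by move: hu hv huv; rewrite -eij !orbb => /eqP -> /eqP ->; rewrite eqxx.
  move: huv; case/orP: hu => /eqP ->; case/orP: hv => /eqP ->; rewrite ?eqxx //= => _.
  by rewrite E_sym.
have [A mA sA] := maxset_exists cl; have [k hk eA] := C_all mA.
by exists k => //; rewrite eA !(subsetP sA) // !inE eqxx ?orbT.
Qed.

(* The empty clique extends to a maximal one, so K >= 1; and H_K = V. *)
Lemma K_pos : (0 < K)%N.
Proof.
have cl : is_clique E set0 by apply/forallP => u; rewrite inE.
have [A mA _] := maxset_exists cl.
by have [k /andP [h1 h2] _] := C_all mA; apply: leq_trans h2.
Qed.

Lemma hist_K : hist C K = setT.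
Proof.
apply/setP => i; rewrite inE.
have [m hm /andP [hi _]] : exists2 m, (1 <= m <= K)%N & (i \in C m) && (i \in C m).
  by apply: clique_cover; rewrite eqxx.
exact: subsetP (sub_hist hm) _ hi.
Qed.

Lemma qidx_spec j : (2 <= j <= K)%N ->
  (1 <= qidx C K j <= K)%N /\ sep C j \subset C (qidx C K j).
Proof.
move=> hj; have [j' /andP [hj'1 hj'2] sj'] := C_perfect hj.
set s := [seq l <- iota 1 K | sep C j \subset C l].
have hin : j' \in s.
  rewrite mem_filter sj' mem_iota hj'1 add1n ltnS.
  by case/andP: hj => _; exact: leq_trans (ltnW hj'2).
rewrite /qidx -/s; case es: s hin => [|a s'] // _.
have : a \in s by rewrite es mem_head.
by rewrite mem_filter mem_iota add1n ltnS => /andP [-> ->].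
Qed.

End CliqueSequence.

Section LocalStatistic.
Variables (N : nat) (Sigma : 'M[R]_N) (x : 'cV[R]_N).
Hypothesis Sigma_sym : Sigma^T = Sigma.
Hypothesis Sigma_pd : forall y : 'cV[R]_N, y != 0 -> 0 < (y^T *m Sigma *m y) 0 0.
Implicit Types (U H D : {set 'I_N}).

Definition localStat U :=
  quad (subv U x) (IminusInv Sigma U) - ln (\det (subm U Sigma)).

Definition diagInd U : 'M[R]_N := \matrix_(i, j) ((i == j) && (i \in U))%:R.

Lemma padV_id U : padV U 1%:M = diagInd U.
Proof.
apply/matrixP => i j; rewrite [RHS]mxE.
case: (boolP ((i \in U) && (j \in U))) => [/andP [hi hj]|hij]; last first.
  rewrite padV_out //; case: eqP => [e|] //=.
  by move: hij; rewrite e andbb => /negbTE ->.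
have [a <-] := enum_val_onto hi; have [b <-] := enum_val_onto hj.
by rewrite padV_enum mxE (inj_eq enum_val_inj) enum_valP andbT.
Qed.

Lemma diagInd_union H D : diagInd (H :|: D) = diagInd H + diagInd D - diagInd (H :&: D).
Proof.
apply/matrixP => i j; rewrite !mxE !inE.
by case: (i == j); case: (i \in H); case: (i \in D); rewrite /=; ring.
Qed.

Lemma quad_IminusInv U :
  quad (subv U x) (IminusInv Sigma U) = quad x (diagInd U) - quad x (invPad Sigma U).
Proof. by rewrite quad_padV /IminusInv padVB padV_id quadB. Qed.

Lemma ln_mulR (a b : R) : 0 < a -> 0 < b -> ln (a * b) = ln a + ln b.
Proof. by move=> /RltbP ha /RltbP hb; exact: ln_mult. Qed.

Lemma localStat_union H D : condIndep Sigma H D ->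
  localStat (H :|: D) = localStat H + localStat D - localStat (H :&: D).
Proof.
move=> hCI; have ldet := congr1 ln (det_union Sigma_sym Sigma_pd hCI).
rewrite !ln_mulR ?det_subm_pos // in ldet.
have ldetU : ln (\det (subm (H :|: D) Sigma)) = ln (\det (subm H Sigma))
    + ln (\det (subm D Sigma)) - ln (\det (subm (H :&: D) Sigma)) by rewrite -ldet addrK.
rewrite /localStat !quad_IminusInv diagInd_union (invPad_union Sigma_sym Sigma_pd hCI).
rewrite ldetU !quadB !quadD; ring.
Qed.

Lemma Tstat_localStat : Tstat Sigma x = localStat setT.
Proof.
have diagT : diagInd setT = 1%:M by apply/matrixP => i j; rewrite !mxE inE andbT.
rewrite /Tstat /localStat quad_IminusInv diagT (invPad_setT Sigma_pd).
by rewrite -det_ext_subm ext_setT -!quadE mulmx1.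
Qed.

End LocalStatistic.

Lemma down_ind (P : nat -> Prop) n :
  P n -> (forall k, (2 <= k <= n)%N -> P k -> P k.-1) ->
  forall k, (1 <= k <= n)%N -> P k.
Proof.
move=> Pn Pstep k /andP [k1 kn]; rewrite (_ : k = n - (n - k))%N; last by lia.
have : (n - k < n)%N by lia.
elim: (n - k)%N => [|d IH] hd; first by rewrite subn0.
rewrite (_ : n - d.+1 = (n - d).-1)%N; last by lia.
by apply: Pstep; [apply/andP; split; lia | apply: IH; lia].
Qed.

Lemma sum_from2 n (F : nat -> R) :
  \sum_(1 <= k < n.+1) (if (2 <= k)%N then F k else 0) = \sum_(2 <= k < n.+1) F k.
Proof.
case: n => [|n]; first by rewrite !big_geq.
by rewrite big_ltn // add0r; apply: eq_big_nat => k /andP [-> _].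
Qed.

(* The statistics of Defs are stated with the subtraction of Stdlib's R_scope,
   which is the ring subtraction of R. *)
Lemma RminusE (a b : R) : Rminus a b = a - b.
Proof. by []. Qed.

Section Decomposition.
Variables (N K : nat) (E : rel 'I_N) (C : nat -> {set 'I_N}) (Sigma : 'M[R]_N).
Hypothesis E_sym : symmetric E.
Hypothesis C_all : forall A, maxset (is_clique E) A -> exists2 k, (1 <= k <= K)%N & C k = A.
Hypothesis C_perfect :
  forall k, (2 <= k <= K)%N -> exists2 j, (1 <= j < k)%N & sep C k \subset C j.
Hypothesis Sigma_sym : Sigma^T = Sigma.
Hypothesis Sigma_pd : forall y : 'cV[R]_N, y != 0 -> 0 < (y^T *m Sigma *m y) 0 0.
Hypothesis Sigma_markov : forall i j : 'I_N, i != j -> ~~ E i j -> invmx Sigma i j = 0.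

(* Invariant of the backward induction: the concentration matrix of the
   history H_k has its nonzero entries inside the cliques C_1, ..., C_k. *)
Definition cliqueSupported k : Prop :=
  forall i j, invPad Sigma (hist C k) i j != 0 ->
  exists2 m, (1 <= m <= k)%N & (i \in C m) && (j \in C m).

(* For k = K this is the Markov property, since H_K = V. *)
Lemma supported_K : cliqueSupported K.
Proof.
move=> i j; rewrite (hist_K E_sym C_all) (invPad_setT Sigma_pd) => hij.
apply: (clique_cover E_sym C_all); case: (i =P j) => //= /eqP hne.
by apply: contraT => hE; move: hij; rewrite Sigma_markov ?eqxx.
Qed.

(* No clique among C_1..C_k meets both H_{k-1} \ C_k and C_k \ H_{k-1}. *)
Lemma supported_condIndep k : (1 <= k)%N -> cliqueSupported k ->
  condIndep Sigma (hist C k.-1) (C k).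
Proof.
move=> hk hS i j hi hiC hj hjH; rewrite -histS //.
apply/eqP; apply: contraT => /hS [m /andP [m1 mk] /andP [him hjm]].
have mk' : (m <= k.-1)%N.
  by rewrite -ltnS prednK // ltn_neqAle mk andbT; apply: contraNneq hiC => <-.
by move: hjH; rewrite (subsetP (sub_hist C (m := m) (k := k.-1) _)) // m1.
Qed.

(* Removing C_k keeps the invariant: entries inside C_k surviving in H_{k-1}
   lie in the separator S_k, which sits in an earlier clique (perfectness). *)
Lemma supported_pred k : (2 <= k <= K)%N -> cliqueSupported k -> cliqueSupported k.-1.
Proof.
move=> hk hS i j hij; have hk1 : (1 <= k)%N by case/andP: hk => /ltnW.
have hD := invPad_union Sigma_sym Sigma_pd (supported_condIndep hk1 hS).
rewrite -histS // in hD.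
case: (boolP ((i \in C k) && (j \in C k))) => [/andP [hiC hjC]|hij2].
  have /andP [hiH hjH] : (i \in hist C k.-1) && (j \in hist C k.-1).
    by apply: contraNT hij => h; rewrite invPad_out.
  have [q /andP [q1 qk] sq] := C_perfect hk.
  exists q; first by rewrite q1 -ltnS prednK.
  by rewrite !(subsetP sq) // /sep inE ?hiH ?hjH.
have [m /andP [m1 mk] hm] : exists2 m, (1 <= m <= k)%N & (i \in C m) && (j \in C m).
  apply: hS; move: hij; rewrite hD addB_mxE [invPad _ (C k) i j]invPad_out //.
  rewrite [invPad _ (_ :&: _) i j]invPad_out ?addr0 ?subr0 // !inE.
  by case/nandP: hij2 => /negbTE ->; rewrite ?andbF.
exists m => //; rewrite m1 -ltnS prednK // ltn_neqAle mk andbT.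
by apply: contraNneq hij2 => e; rewrite -e.
Qed.

Lemma condIndep_hist k : (2 <= k <= K)%N -> condIndep Sigma (hist C k.-1) (C k).
Proof.
move=> /andP [k2 kK]; apply: supported_condIndep; first exact: ltnW.
by apply: (down_ind supported_K supported_pred); rewrite (ltnW k2).
Qed.

Variables (x : 'cV[R]_N) (alpha beta : nat -> R).

(* Telescoping the modularity of localStat along the histories. *)
Lemma localStat_hist k : (1 <= k <= K)%N ->
  localStat Sigma x (hist C k)
  = \sum_(1 <= m < k.+1) localStat Sigma x (C m)
    - \sum_(2 <= m < k.+1) localStat Sigma x (sep C m).
Proof.
elim: k => // k IH /andP [_ hk]; case: k IH hk => [|k] IH hk.
  by rewrite hist1 big_nat1 big_geq // subr0.
have hk2 : (2 <= k.+2 <= K)%N by rewrite hk.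
rewrite histS // (localStat_union x Sigma_sym Sigma_pd (condIndep_hist hk2)) /= IH ?(ltnW hk) //.
rewrite [in RHS]big_nat_recr // [X in _ = _ - X]big_nat_recr //= /sep; ring.
Qed.

Lemma Lstat_local k : (1 <= k <= K)%N ->
  Lstat K C Sigma alpha beta k x =
  localStat Sigma x (C k)
  - \sum_(2 <= j < K.+1 | qidx C K j == k) beta j * localStat Sigma x (sep C j)
  - (if (2 <= k)%N then alpha k * localStat Sigma x (sep C k) else 0).
Proof.
move=> hk; rewrite /Lstat /Jmat /econst /= quadE quadB quadB quad_sum.
have -> : \sum_(2 <= j < K.+1 | qidx C K j == k)
      quad (subv (C k) x) (beta j *: pad (sep C j) (C k) (IminusInv Sigma (sep C j)))
    = \sum_(2 <= j < K.+1 | qidx C K j == k)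
        beta j * quad (subv (sep C j) x) (IminusInv Sigma (sep C j)).
  rewrite big_nat_cond [RHS]big_nat_cond; apply: eq_bigr => j /andP [hj /eqP qj].
  by rewrite quadZ quad_pad // -qj; case: (qidx_spec C_perfect hj).
have -> : quad (subv (C k) x)
     (if (2 <= k)%N then alpha k *: pad (sep C k) (C k) (IminusInv Sigma (sep C k)) else 0)
   = if (2 <= k)%N then alpha k * quad (subv (sep C k) x) (IminusInv Sigma (sep C k)) else 0.
  by case: ifP => _; rewrite ?quad0 // quadZ quad_pad // subsetIr.
rewrite /localStat; under [in RHS]eq_bigr do rewrite mulrBr; rewrite sumrB.
by case: ifP => _; rewrite !RminusE; ring.
Qed.

(* Each separator S_j is charged beta_j at C_(q j) and alpha_j at C_j. *)
Lemma sum_by_qidx (F : nat -> R) :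
  \sum_(1 <= k < K.+1) \sum_(2 <= j < K.+1 | qidx C K j == k) F j = \sum_(2 <= j < K.+1) F j.
Proof.
under eq_bigr do rewrite big_mkcond /=.
rewrite exchange_big /=; apply: eq_big_nat => j hj.
have [q1K _] := qidx_spec C_perfect hj.
rewrite (bigD1_seq (qidx C K j)) ?iota_uniq ?mem_index_iota ?ltnS //= eqxx big1 ?addr0 //.
by move=> k /negbTE hk; rewrite eq_sym hk.
Qed.

Lemma sum_Lstat :
  \sum_(1 <= k < K.+1) Lstat K C Sigma alpha beta k x
  = \sum_(1 <= k < K.+1) localStat Sigma x (C k)
    - \sum_(2 <= j < K.+1) (alpha j + beta j) * localStat Sigma x (sep C j).
Proof.
rewrite (@eq_big_nat _ _ _ 1 K.+1 _ _ (fun k (hk : (1 <= k < K.+1)%N) => Lstat_local hk)).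
rewrite !sumrB sum_by_qidx sum_from2.
under [X in _ = _ - X]eq_bigr do rewrite mulrDl.
by rewrite big_split /=; ring.
Qed.

End Decomposition.

Theorem mainTheorem1 (N K : nat) (E : rel 'I_N) (C : nat -> {set 'I_N})
  (Sigma : 'M[R]_N) (alpha beta : nat -> R)
  (* undirected simple graph *)
  (HEsym : symmetric E) (HEirr : irreflexive E)
  (* C_1, ..., C_K are exactly the maximal cliques, listed without repetition *)
  (Hmax : forall k, (1 <= k <= K)%N -> maxset (is_clique E) (C k))
  (Hall : forall A, maxset (is_clique E) A -> exists2 k, (1 <= k <= K)%N & C k = A)
  (Hinj : forall k l, (1 <= k <= K)%N -> (1 <= l <= K)%N -> C k = C l -> k = l)
  (* perfect sequence *)
  (Hperf : forall k, (2 <= k <= K)%N -> exists2 j, (1 <= j < k)%N & sep C k \subset C j)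
  (* Sigma symmetric positive definite *)
  (HSsym : Sigma^T = Sigma)
  (HSpd : forall y : 'cV[R]_N, y != 0 -> 0 < (y^T *m Sigma *m y) ord0 ord0)
  (* Sigma Markov w.r.t. the graph *)
  (HSmarkov : forall i j : 'I_N, i != j -> ~~ E i j -> invmx Sigma i j = 0)
  (* coefficients *)
  (Hab : forall k, (2 <= k <= K)%N -> alpha k + beta k = 1)
  (x : 'cV[R]_N) :
  Tstat Sigma x = \sum_(1 <= k < K.+1) Lstat K C Sigma alpha beta k x.
Proof.
rewrite (Tstat_localStat x HSpd) -(hist_K HEsym Hall).
rewrite (localStat_hist HEsym Hall Hperf HSsym HSpd HSmarkov x);
  last by rewrite (K_pos Hall) leqnn.
rewrite (sum_Lstat Sigma Hperf); congr (_ - _).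
by apply: eq_big_nat => j hj; rewrite Hab ?mul1r.
Qed.
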